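(* Let $n$ be a non-negative integer and $r,s\in\mathbb{C}\setminus\mathbb{Z}^{-}$ with $s\ne0$ and $r-s\notin\mathbb{Z}^{-}$. Then \[ \sum_{k=0}^{n}(-1)^{k}\frac{\binom{n}{k}}{\binom{k+r}{s}}H_k=H_n\left(\frac{s}{r-s+1}\frac{1}{\binom{n+r}{r-s+1}}-\frac{1}{\binom{r}{s}}\right)+s\sum_{k=0}^{n-1}\frac{H_{n-1-k}}{(k+s)\binom{r+k+1}{r-s+1}}. \]
   Context: $\mathbb{Z}^{-}$ denotes the set of negative integers. For complex $z$ not a negative integer, $H_z=\psi(z+1)+\gamma$; for integers $n\ge0$, $H_n=\sum_{j=1}^n1/j$. Binomial coefficients with complex entries: $\binom{x}{y}=\frac{\Gamma(x+1)}{\Gamma(y+1)\Gamma(x-y+1)}$. *)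

From Stdlib Require Import Reals Factorial.
From Coquelicot Require Import Coquelicot.
Open Scope C_scope.

Fixpoint sumC (n : nat) (f : nat -> C) : C :=
  match n with
  | O => 0
  | S m => sumC m f + f m
  end.

Fixpoint prodC (n : nat) (f : nat -> C) : C :=
  match n with
  | O => 1
  | S m => prodC m f * f m
  end.

(* complex power with positive real base: a^z = exp(z ln a), a > 0 *)
Definition Rcpow (a : R) (z : C) : C :=
  (exp (Re z * ln a) * cos (Im z * ln a), exp (Re z * ln a) * sin (Im z * ln a))%R.

(* Euler's Gamma function on C via Gauss' limit formula
   Gamma z = lim_{m -> oo} m! m^z / (z (z+1) ... (z+m)),
   valid for z not in {0,-1,-2,...}. *)
Definition Gauss_seq (z : C) (m : nat) : C :=
  RtoC (INR (fact m)) * Rcpow (INR m) z / prodC (S m) (fun j => z + RtoC (INR j)).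

Definition CGamma (z : C) : C :=
  @lim (CompleteNormedModule.CompleteSpace _ C_CompleteNormedModule)
    (filtermap (Gauss_seq z) eventually).

Definition Cbinom (x y : C) : C :=
  CGamma (x + 1) / (CGamma (y + 1) * CGamma (x - y + 1)).

Definition harm (n : nat) : C := sumC n (fun j => / RtoC (INR (S j))).

Definition is_negint (z : C) : Prop := exists m : nat, z = - RtoC (INR (S m)).

Definition nbinom (n k : nat) : R := Binomial.C n k.

(* Put a := r + 1 and b := r - s + 1, so that a - b = s.  Off the poles Gamma (z + k) =
   (z)_k Gamma z, so 1 / binom (k + r, s) = (1 / binom (r, s)) (b)_k / (a)_k, and the two
   binomials on the right-hand side are likewise multiples of u_k := (s)_k / (a)_k.  Pascal's
   rule and the contiguity relations of (c)_k / (a)_k give, by induction on n for all a and b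
   at once, the Chu-Vandermonde evaluation
     sum_k (-1)^k C(n,k) (b)_k / (a)_k = u_n,
   and then, with H_(k+1) = H_k + 1/(k+1) and C(n+1,k+1) / (k+1) = C(n,k) / (n+1),
     sum_k (-1)^k C(n,k) (b)_k / (a)_k H_k = sum_(k<n) (u_n - u_k) / (n - k).
   Abel summation rewrites the last sum as H_n (u_n - 1) + sum_(k<n) H_(n-1-k) (u_k - u_(k+1)),
   which is the right-hand side divided by 1 / binom (r, s).
   The functional equation Gamma (z + 1) = z Gamma z for Gamma defined as Gauss's limit needs
   the limit to exist: consecutive terms of Gauss's sequence have ratio 1 + O(1/m^2), which
   makes the sequence Cauchy. *)

From Stdlib Require Import Reals Lra Lia Psatz Factorial.
From Coquelicot Require Import Coquelicot.

Open Scope R_scope.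

(** * Elementary estimates *)

Lemma exp_sub_1_sub_bound (u : R) : Rabs u <= / 2 -> 0 <= exp u - 1 - u <= 2 * u ^ 2.
Proof.
  intros Hu.
  assert (Hinv : exp (- u) * exp u = 1) by (rewrite <- exp_plus, Rplus_opp_l; apply exp_0).
  pose proof (exp_ineq1_le u). pose proof (exp_ineq1_le (- u)). pose proof (exp_pos u).
  assert (exp u * (1 - u) <= 1) by nra.
  split_Rabs; nra.
Qed.

Lemma cos_ge_1_sub_sq (v : R) : 1 - v ^ 2 / 2 <= cos v.
Proof.
  destruct (Rle_dec (Rabs v) 2) as [Hv | Hv].
  - destruct (pre_cos_bound v 0) as [Hlow _]; [split_Rabs; lra .. |].
    unfold cos_approx, cos_term in Hlow; simpl in Hlow. lra.
  - pose proof (COS_bound v). split_Rabs; nra.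
Qed.

Lemma sin_sub_id_bound_pos (v : R) : 0 <= v -> Rabs (sin v - v) <= v ^ 3 / 6.
Proof.
  intros Hv. destruct (Req_dec v 0) as [-> | Hv0]; [rewrite sin_0; split_Rabs; lra |].
  pose proof (sin_lt_x v ltac:(lra)).
  destruct (Rle_dec v 4) as [Hv4 | Hv4].
  - destruct (pre_sin_bound v 0 Hv Hv4) as [Hlow _].
    unfold sin_approx, sin_term in Hlow; simpl in Hlow. split_Rabs; nra.
  - pose proof (SIN_bound v). split_Rabs; nra.
Qed.

Lemma sin_sub_id_bound (v : R) : Rabs (sin v - v) <= Rabs v ^ 3 / 6.
Proof.
  destruct (Rle_dec 0 v) as [Hv | Hv].
  - rewrite (Rabs_pos_eq v Hv). exact (sin_sub_id_bound_pos v Hv).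
  - rewrite <- Rabs_Ropp, (Rabs_left v) by lra.
    replace (- (sin v - v)) with (sin (- v) - (- v)) by (rewrite sin_neg; ring).
    apply sin_sub_id_bound_pos. lra.
Qed.

Lemma ln_succ_sub_bounds (x : R) : 0 < x -> / (x + 1) <= ln (x + 1) - ln x <= / x.
Proof.
  intros Hx.
  assert (ln_le_id : forall y, -1 < y -> ln (1 + y) <= y).
  { intros y Hy. rewrite <- (ln_exp y) at 2. apply ln_le; [lra | apply exp_ineq1_le]. }
  split.
  - assert (E : ln x - ln (x + 1) = ln (1 + - / (x + 1)))
      by (rewrite <- ln_div by lra; f_equal; field; lra).
    assert (0 < / (x + 1) < 1).
    { split; [apply Rinv_0_lt_compat; lra |].
      rewrite <- Rinv_1. apply Rinv_lt_contravar; lra. }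
    pose proof (ln_le_id (- / (x + 1)) ltac:(lra)). lra.
  - replace (ln (x + 1) - ln x) with (ln (1 + / x)).
    + apply ln_le_id. pose proof (Rinv_0_lt_compat x Hx). lra.
    + rewrite <- ln_div by lra. f_equal. field. lra.
Qed.

Lemma inv_sq_le_telescope (x : R) : 1 <= x -> / x ^ 2 <= 2 * (/ x - / (x + 1)).
Proof.
  intros Hx.
  assert (E : 2 * (/ x - / (x + 1)) - / x ^ 2 = (x - 1) / (x ^ 2 * (x + 1))) by (field; lra).
  assert (0 <= (x - 1) / (x ^ 2 * (x + 1))).
  { apply Rmult_le_pos; [lra |]. left. apply Rinv_0_lt_compat. nra. }
  lra.
Qed.

Open Scope C_scope.

(* Coquelicot's [Cinv] is total, with [/ 0 = 0]; hence [Cinv_mult] and [Cinv_inv] hold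
   without side conditions. *)
Lemma Cinv_0 : / (0 : C) = 0.
Proof. apply injective_projections; unfold Cinv; simpl; unfold Rdiv; ring. Qed.

Lemma Cinv_mult (x y : C) : / (x * y) = / x * / y.
Proof.
  destruct (Ceq_dec x 0) as [-> | Hx]; [rewrite Cmult_0_l, Cinv_0; ring |].
  destruct (Ceq_dec y 0) as [-> | Hy]; [rewrite Cmult_0_r, Cinv_0; ring |].
  field. auto.
Qed.

Lemma Cinv_inv (x : C) : / / x = x.
Proof. destruct (Ceq_dec x 0) as [-> | Hx]; [now rewrite !Cinv_0 | field; exact Hx]. Qed.

Lemma RtoC_INR_S (k : nat) : RtoC (INR (S k)) = RtoC (INR k) + 1.
Proof. rewrite S_INR, RtoC_plus. reflexivity. Qed.

Lemma RtoC_INR_S_neq0 (k : nat) : RtoC (INR (S k)) <> 0.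
Proof. intros E. apply RtoC_inj in E. exact (not_0_INR (S k) (Nat.neq_succ_0 k) E). Qed.

Lemma Cmod_le_Re_Im (w : C) : (Cmod w <= Rabs (Re w) + Rabs (Im w))%R.
Proof.
  pose proof (Cmod_ge_0 w). pose proof (Rabs_pos (Re w)). pose proof (Rabs_pos (Im w)).
  assert (Cmod w ^ 2 <= (Rabs (Re w) + Rabs (Im w)) ^ 2)%R.
  { rewrite Cmod2_alt, <- (pow2_abs (Re w)), <- (pow2_abs (Im w)). nra. }
  nra.
Qed.

Lemma Im_le_Cmod (w : C) : (Rabs (Im w) <= Cmod w)%R.
Proof.
  unfold Cmod. rewrite <- sqrt_pow2 with (x := Rabs (Im w)) by apply Rabs_pos.
  apply sqrt_le_1_alt. rewrite <- (pow2_abs (snd w)). pose proof (pow2_ge_0 (fst w)).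
  unfold Im. lra.
Qed.

Lemma Cmod_add_real_ge (z : C) (x : R) : (x - Cmod z <= Cmod (z + RtoC x))%R.
Proof.
  pose proof (Cmod_triangle (z + RtoC x) (- z)) as H.
  replace (z + RtoC x + - z) with (RtoC x) in H by ring.
  rewrite Cmod_R, Cmod_opp in H. pose proof (Rle_abs x). lra.
Qed.

Definition cexp (w : C) : C := (exp (Re w) * cos (Im w), exp (Re w) * sin (Im w))%R.

Lemma cexp_plus (p q : C) : cexp (p + q) = cexp p * cexp q.
Proof.
  destruct p as [p1 p2], q as [q1 q2]. unfold cexp. simpl.
  rewrite exp_plus, cos_plus, sin_plus.
  apply injective_projections; simpl; ring.
Qed.

Lemma Rcpow_cexp (a : R) (z : C) : Rcpow a z = cexp (z * RtoC (ln a)).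
Proof.
  unfold Rcpow, cexp, Re, Im. simpl.
  replace (fst z * ln a - snd z * 0)%R with (fst z * ln a)%R by ring.
  replace (fst z * 0 + snd z * ln a)%R with (snd z * ln a)%R by ring.
  reflexivity.
Qed.

Lemma cexp_sub_1_sub_bound (w : C) : (Cmod w <= / 2)%R ->
  (Cmod (cexp w - 1 - w) <= 8 * Cmod w ^ 2)%R.
Proof.
  intros Hw. set (u := Re w). set (v := Im w).
  assert (Hu : (Rabs u <= Cmod w)%R) by apply re_le_Cmod.
  assert (Hv : (Rabs v <= Cmod w)%R) by apply Im_le_Cmod.
  pose proof (exp_sub_1_sub_bound u ltac:(lra)) as Hexp.
  pose proof (cos_ge_1_sub_sq v). pose proof (COS_bound v).
  pose proof (sin_sub_id_bound v). pose proof (exp_pos u).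
  assert (Hexp2 : (exp u <= 2)%R) by (split_Rabs; nra).
  assert (Hv3 : (Rabs v ^ 3 / 6 <= Rabs v ^ 2 <= Rabs v)%R) by (pose proof (Rabs_pos v); nra).
  assert (Hre : (Rabs (exp u * cos v - 1 - u) <= 2 * u ^ 2 + v ^ 2)%R).
  { assert (0 <= exp u * (1 - cos v) <= v ^ 2)%R by nra.
    replace (exp u * cos v - 1 - u)%R with (exp u - 1 - u - exp u * (1 - cos v))%R by ring.
    split_Rabs; nra. }
  assert (Him : (Rabs (exp u * sin v - v) <= 4 * Rabs u * Rabs v + v ^ 2)%R).
  { replace (exp u * sin v - v)%R with ((exp u - 1) * sin v + (sin v - v))%R by ring.
    eapply Rle_trans; [apply Rabs_triang |]. rewrite Rabs_mult.
    assert (Rabs (exp u - 1) <= 2 * Rabs u)%R by (split_Rabs; nra).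
    assert (Rabs (sin v) <= 2 * Rabs v)%R.
    { replace (sin v) with ((sin v - v) + v)%R by ring.
      eapply Rle_trans; [apply Rabs_triang |]. lra. }
    assert (Rabs (exp u - 1) * Rabs (sin v) <= 2 * Rabs u * (2 * Rabs v))%R
      by (apply Rmult_le_compat; auto using Rabs_pos).
    rewrite <- (pow2_abs v). lra. }
  eapply Rle_trans; [apply Cmod_le_Re_Im |].
  replace (Re (cexp w - 1 - w)) with (exp u * cos v - 1 - u)%R
    by (unfold cexp, u, v, Re, Im; simpl; ring).
  replace (Im (cexp w - 1 - w)) with (exp u * sin v - v)%R
    by (unfold cexp, u, v, Re, Im; simpl; ring).
  rewrite <- (pow2_abs u), <- (pow2_abs v) in *.
  pose proof (Rabs_pos u). pose proof (Rabs_pos v).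
  nra.
Qed.

(** * Gauss's sequence and the functional equation of Gamma *)

Section RatioSequence.

Variables (g rho : nat -> C) (M : nat) (K : R).
Hypothesis M_ge1 : (1 <= M)%nat.
Hypothesis K_ge0 : (0 <= K)%R.
Hypothesis g_succ : forall m, g (S m) = g m * rho m.
Hypothesis rho_sub_1_bound :
  forall m, (M <= m)%nat -> (Cmod (rho m - 1) <= K / INR m ^ 2)%R.

Let INR_ge1 (m : nat) : (M <= m)%nat -> (1 <= INR m)%R.
Proof. intros Hm. apply (le_INR 1). lia. Qed.

Let K_div_sq_telescope (m : nat) : (M <= m)%nat ->
  (K / INR m ^ 2 <= 2 * K * (/ INR m - / INR (S m)))%R.
Proof.
  intros Hm. rewrite S_INR. pose proof (inv_sq_le_telescope (INR m) (INR_ge1 m Hm)).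
  unfold Rdiv. nra.
Qed.

(* The weight [exp (2 K / m)] absorbs the factor [1 + K / m ^ 2] because
   [K / m ^ 2 <= 2 K (1 / m - 1 / (m + 1))]. *)
Lemma ratio_seq_step (m : nat) : (M <= m)%nat ->
  (Cmod (g (S m)) * exp (2 * K / INR (S m)) <= Cmod (g m) * exp (2 * K / INR m))%R.
Proof.
  intros Hm.
  assert (Hg : (Cmod (g (S m)) <= Cmod (g m) * exp (K / INR m ^ 2))%R).
  { rewrite g_succ, Cmod_mult. apply Rmult_le_compat_l; [apply Cmod_ge_0 |].
    replace (rho m) with (1 + (rho m - 1)) by ring.
    eapply Rle_trans; [apply Cmod_triangle |]. rewrite Cmod_1.
    eapply Rle_trans; [| apply exp_ineq1_le]. pose proof (rho_sub_1_bound m Hm). lra. }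
  assert (Hexp : (exp (K / INR m ^ 2) * exp (2 * K / INR (S m)) <= exp (2 * K / INR m))%R).
  { rewrite <- exp_plus.
    assert (Hle : (K / INR m ^ 2 + 2 * K / INR (S m) <= 2 * K / INR m)%R)
      by (pose proof (K_div_sq_telescope m Hm); unfold Rdiv in *; lra).
    destruct (Rle_lt_or_eq_dec _ _ Hle) as [Hlt | ->]; [left; now apply exp_increasing | lra]. }
  pose proof (exp_pos (2 * K / INR (S m))). pose proof (Cmod_ge_0 (g m)).
  eapply Rle_trans; [apply Rmult_le_compat_r; [lra | exact Hg] |].
  rewrite Rmult_assoc. apply Rmult_le_compat_l; lra.
Qed.

Lemma ratio_seq_bounded :
  exists B, (0 <= B)%R /\ forall m, (M <= m)%nat -> (Cmod (g m) <= B)%R.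
Proof.
  exists (Cmod (g M) * exp (2 * K / INR M))%R.
  split; [pose proof (Cmod_ge_0 (g M)); pose proof (exp_pos (2 * K / INR M)); nra |].
  assert (Hdec : forall d, (Cmod (g (M + d)%nat) * exp (2 * K / INR (M + d))
                            <= Cmod (g M) * exp (2 * K / INR M))%R).
  { induction d as [| d IH]; [rewrite Nat.add_0_r; lra |].
    rewrite Nat.add_succ_r. eapply Rle_trans; [apply ratio_seq_step; lia | exact IH]. }
  intros m Hm. replace m with (M + (m - M))%nat in * by lia.
  eapply Rle_trans; [| apply Hdec].
  assert (0 <= 2 * K / INR (M + (m - M)))%R
    by (apply Rmult_le_pos; [lra | left; apply Rinv_0_lt_compat; pose proof (INR_ge1 _ Hm); lra]).
  pose proof (exp_ineq1_le (2 * K / INR (M + (m - M)))).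
  rewrite <- (Rmult_1_r (Cmod _)) at 1. apply Rmult_le_compat_l; [apply Cmod_ge_0 | lra].
Qed.

Lemma ratio_seq_increment (B : R) : (forall m, (M <= m)%nat -> (Cmod (g m) <= B)%R) ->
  forall m d, (M <= m)%nat ->
  (Cmod (g (m + d)%nat - g m) <= 2 * B * K * (/ INR m - / INR (m + d)))%R.
Proof.
  intros HB m d Hm. induction d as [| d IH].
  - rewrite Nat.add_0_r. replace (g m - g m) with (RtoC 0) by ring. rewrite Cmod_0. lra.
  - rewrite Nat.add_succ_r.
    replace (g (S (m + d)) - g m) with ((g (S (m + d)) - g (m + d)%nat) + (g (m + d)%nat - g m))
      by ring.
    eapply Rle_trans; [apply Cmod_triangle |].
    assert (Hj : (M <= m + d)%nat) by lia.
    assert (Hstep : (Cmod (g (S (m + d)) - g (m + d)%nat) <= B * (K / INR (m + d) ^ 2))%R).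
    { rewrite g_succ. replace (g (m + d)%nat * rho (m + d)%nat - g (m + d)%nat)
        with (g (m + d)%nat * (rho (m + d)%nat - 1)) by ring.
      rewrite Cmod_mult. apply Rmult_le_compat; auto using Cmod_ge_0. }
    assert (0 <= B)%R by (eapply Rle_trans; [apply Cmod_ge_0 | apply (HB m Hm)]).
    pose proof (K_div_sq_telescope _ Hj).
    assert (B * (K / INR (m + d) ^ 2) <= B * (2 * K * (/ INR (m + d) - / INR (S (m + d)))))%R
      by (apply Rmult_le_compat_l; lra).
    lra.
Qed.

Lemma ratio_seq_cauchy (eps : R) : (0 < eps)%R ->
  exists N, forall p, (N <= p)%nat -> (Cmod (g p - g N) < eps)%R.
Proof.
  intros Heps. destruct ratio_seq_bounded as [B [HB0 HB]].
  destruct (INR_unbounded (2 * B * K / eps)) as [n0 Hn0].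
  exists (M + n0)%nat. intros p Hp. replace p with (M + n0 + (p - (M + n0)))%nat by lia.
  eapply Rle_lt_trans; [apply (ratio_seq_increment B HB); lia |].
  set (N := (M + n0)%nat). set (q := (N + (p - N))%nat).
  assert (HN : (INR n0 <= INR N)%R) by (apply le_INR; unfold N; lia).
  assert (HN1 : (1 <= INR N)%R) by (apply INR_ge1; unfold N; lia).
  assert (Hq : (0 < / INR q)%R) by (apply Rinv_0_lt_compat, lt_0_INR; unfold q, N; lia).
  assert (0 <= 2 * B * K)%R by nra.
  assert (2 * B * K < eps * INR N)%R.
  { apply (Rmult_lt_compat_r eps) in Hn0; [| lra]. unfold Rdiv in Hn0.
    rewrite Rmult_assoc, Rinv_l in Hn0 by lra. nra. }
  assert (2 * B * K * / INR N < eps)%R.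
  { apply (Rmult_lt_reg_r (INR N)); [lra |]. rewrite Rmult_assoc, Rinv_l by lra. lra. }
  nra.
Qed.

End RatioSequence.

Definition gauss_ratio (z : C) (m : nat) : C :=
  RtoC (INR (S m)) * cexp (z * RtoC (ln (INR (S m)) - ln (INR m))) / (z + RtoC (INR (S m))).

Lemma Gauss_seq_succ (z : C) (m : nat) : Gauss_seq z (S m) = Gauss_seq z m * gauss_ratio z m.
Proof.
  unfold Gauss_seq, gauss_ratio. rewrite !Rcpow_cexp.
  replace (z * RtoC (ln (INR (S m))))
    with (z * RtoC (ln (INR m)) + z * RtoC (ln (INR (S m)) - ln (INR m)))
    by (rewrite RtoC_minus; ring).
  rewrite cexp_plus.
  change (prodC (S (S m)) (fun j => z + RtoC (INR j)))
    with (prodC (S m) (fun j => z + RtoC (INR j)) * (z + RtoC (INR (S m)))).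
  change (fact (S m)) with (S m * fact m)%nat. rewrite mult_INR, RtoC_mult.
  unfold Cdiv. rewrite Cinv_mult. ring.
Qed.

Lemma gauss_ratio_sub_1 (z : C) (m : nat) (L : R) :
  L = (ln (INR (S m)) - ln (INR m))%R -> z + RtoC (INR (S m)) <> 0 ->
  gauss_ratio z m - 1
  = (RtoC (INR (S m)) * (cexp (z * RtoC L) - 1 - z * RtoC L)
     + z * RtoC (INR (S m) * L - 1)) / (z + RtoC (INR (S m))).
Proof.
  intros HL HD. unfold gauss_ratio. rewrite <- HL, RtoC_minus, RtoC_mult. field. exact HD.
Qed.

Lemma gauss_ratio_numerator_bound (z : C) (x L : R) :
  (2 * Cmod z + 2 <= x)%R -> (/ (x + 1) <= L <= / x)%R ->
  (Cmod (RtoC (x + 1) * (cexp (z * RtoC L) - 1 - z * RtoC L) + z * RtoC ((x + 1) * L - 1))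
   <= (16 * Cmod z ^ 2 + Cmod z) * / x)%R.
Proof.
  intros Hx HL. pose proof (Cmod_ge_0 z) as HA. set (A := Cmod z) in *.
  assert (Hxinv : (0 < / x /\ x * / x = 1)%R) by (split; [apply Rinv_0_lt_compat | field]; lra).
  assert (Hx1 : (0 < / (x + 1) /\ (x + 1) * / (x + 1) = 1)%R)
    by (split; [apply Rinv_0_lt_compat | field]; lra).
  assert (HxL : (0 <= (x + 1) * L - 1 <= / x)%R) by nra.
  assert (HE : (Cmod (cexp (z * RtoC L) - 1 - z * RtoC L) <= 8 * (A * / x) ^ 2)%R).
  { assert (Hw : (Cmod (z * RtoC L) <= A * / x)%R).
    { rewrite Cmod_mult, Cmod_R, Rabs_pos_eq by lra. apply Rmult_le_compat_l; lra. }
    eapply Rle_trans; [apply cexp_sub_1_sub_bound; nra |].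
    pose proof (Cmod_ge_0 (z * RtoC L)). nra. }
  eapply Rle_trans; [apply Cmod_triangle |].
  rewrite !Cmod_mult, !Cmod_R, !Rabs_pos_eq by lra. fold A.
  assert ((x + 1) * Cmod (cexp (z * RtoC L) - 1 - z * RtoC L) <= (x + 1) * (8 * (A * / x) ^ 2))%R
    by (apply Rmult_le_compat_l; lra).
  assert (A * ((x + 1) * L - 1) <= A * / x)%R by (apply Rmult_le_compat_l; lra).
  assert ((x + 1) * (8 * (A * / x) ^ 2) <= 16 * A ^ 2 * / x)%R.
  { replace ((x + 1) * (8 * (A * / x) ^ 2))%R with (8 * A ^ 2 * / x * ((x + 1) * / x))%R
      by (field; lra).
    assert ((x + 1) * / x <= 2)%R by nra.
    assert (0 <= 8 * A ^ 2 * / x)%R by nra. nra. }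
  lra.
Qed.

Lemma gauss_ratio_sub_1_bound (z : C) (m : nat) : (2 * Cmod z + 2 <= INR m)%R ->
  (Cmod (gauss_ratio z m - 1) <= (32 * Cmod z ^ 2 + 2 * Cmod z) / INR m ^ 2)%R.
Proof.
  intros Hm. pose proof (Cmod_ge_0 z) as HA.
  set (L := (ln (INR (S m)) - ln (INR m))%R).
  assert (HL : (/ (INR m + 1) <= L <= / INR m)%R)
    by (unfold L; rewrite S_INR; apply ln_succ_sub_bounds; lra).
  assert (HD : (INR m / 2 <= Cmod (z + RtoC (INR (S m))))%R).
  { pose proof (Cmod_add_real_ge z (INR (S m))) as HDz. rewrite S_INR in HDz |- *. lra. }
  assert (HD0 : z + RtoC (INR (S m)) <> 0) by (intros E; rewrite E, Cmod_0 in HD; lra).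
  rewrite (gauss_ratio_sub_1 z m L eq_refl HD0), Cmod_div, S_INR by exact HD0.
  rewrite S_INR in HD.
  pose proof (gauss_ratio_numerator_bound z (INR m) L Hm HL) as HN.
  apply Rle_trans with ((16 * Cmod z ^ 2 + Cmod z) * / INR m * / (INR m / 2))%R.
  { apply Rmult_le_compat; [apply Cmod_ge_0 | left; apply Rinv_0_lt_compat; lra | exact HN |].
    apply Rinv_le_contravar; [lra | exact HD]. }
  right. field. lra.
Qed.

Lemma Gauss_seq_cauchy (z : C) (eps : R) : (0 < eps)%R ->
  exists N, forall p, (N <= p)%nat -> (Cmod (Gauss_seq z p - Gauss_seq z N) < eps)%R.
Proof.
  destruct (INR_unbounded (2 * Cmod z + 2)) as [M HM].
  pose proof (Cmod_ge_0 z).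
  apply (ratio_seq_cauchy (Gauss_seq z) (gauss_ratio z) M (32 * Cmod z ^ 2 + 2 * Cmod z)).
  - apply (INR_lt 0). simpl. lra.
  - nra.
  - apply Gauss_seq_succ.
  - intros m Hm. apply gauss_ratio_sub_1_bound.
    pose proof (le_INR _ _ Hm). lra.
Qed.

Lemma Gauss_seq_cvg (z : C) : filterlim (Gauss_seq z) eventually (locally (CGamma z)).
Proof.
  apply filterlim_locally. intros eps.
  apply (complete_cauchy (T := CompleteNormedModule.CompleteSpace _ C_CompleteNormedModule)
           (filtermap (Gauss_seq z) eventually)).
  - apply filtermap_proper_filter, eventually_filter.
  - intros e. destruct (Gauss_seq_cauchy z e (cond_pos e)) as [N HN].
    exists (Gauss_seq z N), N. intros p Hp.
    apply (norm_compat1 (V := C_NormedModule)). exact (HN p Hp).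
Qed.

(* [filterlim_scal] uses the Cmod-ball uniformity of the scalar ring [C_AbsRing], whereas
   [locally] on [C] uses the product uniformity; [locally_C] identifies their neighbourhoods. *)
Lemma filterlim_Cmult {T : Type} {F : (T -> Prop) -> Prop} {FF : Filter F}
  (f g : T -> C) (a b : C) :
  filterlim f F (locally a) -> filterlim g F (locally b) ->
  filterlim (fun x => f x * g x) F (locally (a * b)).
Proof.
  intros Hf Hg.
  eapply filterlim_comp_2; [| exact Hg | exact (filterlim_scal (V := C_NormedModule) a b)].
  intros P HP. apply Hf. now apply locally_C.
Qed.

Lemma nat_div_add_nat_cvg_1 (z : C) :
  filterlim (fun m => RtoC (INR m) / (z + RtoC (INR m) + 1)) eventually (locally (1 : C)).
Proof.
  apply filterlim_locally. intros eps. pose proof (cond_pos eps) as Heps.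
  set (c := Cmod (z + 1)).
  assert (Hc : (0 <= c / eps)%R) by (apply Rdiv_le_0_compat, Heps; apply Cmod_ge_0).
  destruct (INR_unbounded (Cmod z + c / eps)) as [N HN].
  exists N. intros m Hm. apply (norm_compat1 (V := C_NormedModule)).
  change (minus ?y ?x) with (y - x). set (D := z + RtoC (INR m) + 1).
  assert (HD : (c / eps < Cmod D)%R).
  { pose proof (Cmod_add_real_ge z (INR m + 1)). pose proof (le_INR _ _ Hm).
    unfold D. rewrite <- Cplus_assoc, <- RtoC_plus. lra. }
  assert (HD0 : D <> 0) by (intros E; rewrite E, Cmod_0 in HD; lra).
  replace (RtoC (INR m) / D - 1) with (- (z + 1) / D) by (unfold D; field; exact HD0).
  rewrite Cmod_div, Cmod_opp by exact HD0. fold c.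
  apply Rlt_div_l; [lra |]. apply Rlt_div_l in HD; [lra | exact Heps].
Qed.

Definition nonpole (z : C) : Prop := forall m : nat, z + RtoC (INR m) <> 0.

Lemma nonpole_neq0 (z : C) : nonpole z -> z <> 0.
Proof. intros Hz E. apply (Hz O). rewrite E. simpl. ring. Qed.

Lemma nonpole_succ (z : C) : nonpole z -> nonpole (z + 1).
Proof.
  intros Hz m. replace (z + 1 + RtoC (INR m)) with (z + RtoC (INR (S m)))
    by (rewrite RtoC_INR_S; ring). apply Hz.
Qed.

Lemma nonpole_add_nat (z : C) (k : nat) : nonpole z -> nonpole (z + RtoC (INR k)).
Proof. intros Hz m. rewrite <- Cplus_assoc, <- RtoC_plus, <- plus_INR. apply Hz. Qed.

Lemma nonpole_succ_of_not_negint (x : C) : ~ is_negint x -> nonpole (x + 1).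
Proof.
  intros Hx m E. apply Hx. exists m.
  replace x with (x + 1 + RtoC (INR m) - RtoC (INR (S m))) by (rewrite RtoC_INR_S; ring).
  rewrite E. ring.
Qed.

Lemma nonpole_of_not_negint (x : C) : ~ is_negint x -> x <> 0 -> nonpole x.
Proof.
  intros Hx Hx0 [| m] E.
  - apply Hx0. rewrite <- E. simpl. ring.
  - apply Hx. exists m. replace x with (x + RtoC (INR (S m)) - RtoC (INR (S m))) by ring.
    rewrite E. ring.
Qed.

Definition poch (z : C) (k : nat) : C := prodC k (fun i => z + RtoC (INR i)).

Lemma poch_0 (z : C) : poch z 0 = 1.
Proof. reflexivity. Qed.

Lemma poch_succ_l (z : C) (k : nat) : poch z (S k) = z * poch (z + 1) k.
Proof.
  unfold poch. induction k as [| k IH]; [simpl; ring |].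
  change (prodC (S (S k)) (fun i => z + RtoC (INR i)))
    with (prodC (S k) (fun i => z + RtoC (INR i)) * (z + RtoC (INR (S k)))).
  rewrite IH. simpl prodC. rewrite RtoC_INR_S. ring.
Qed.

Lemma poch_neq0 (z : C) (k : nat) : nonpole z -> poch z k <> 0.
Proof.
  intros Hz. induction k as [| k IH]; simpl.
  - exact C1_nz.
  - exact (Cmult_neq_0 _ _ IH (Hz k)).
Qed.

Lemma Rcpow_succ (a : R) (z : C) : (0 < a)%R -> Rcpow a (z + 1) = RtoC a * Rcpow a z.
Proof.
  intros Ha. rewrite !Rcpow_cexp.
  replace ((z + 1) * RtoC (ln a)) with (RtoC (ln a) + z * RtoC (ln a)) by ring.
  rewrite cexp_plus. f_equal.
  unfold cexp. simpl. rewrite exp_ln, cos_0, sin_0 by exact Ha.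
  apply injective_projections; simpl; ring.
Qed.

Lemma Gauss_seq_shift (z : C) (m : nat) : nonpole z -> (1 <= m)%nat ->
  Gauss_seq (z + 1) m = z * Gauss_seq z m * (RtoC (INR m) / (z + RtoC (INR m) + 1)).
Proof.
  intros Hz Hm. unfold Gauss_seq.
  rewrite Rcpow_succ by (apply lt_0_INR; lia).
  change (prodC (S m) (fun j => z + 1 + RtoC (INR j))) with (poch (z + 1) (S m)).
  change (prodC (S m) (fun j => z + RtoC (INR j))) with (poch z (S m)).
  assert (E : z * poch (z + 1) (S m) = poch z (S m) * (z + RtoC (INR m) + 1)).
  { rewrite <- poch_succ_l.
    change (poch z (S (S m))) with (poch z (S m) * (z + RtoC (INR (S m)))).
    rewrite RtoC_INR_S. ring. }
  pose proof (poch_neq0 z (S m) Hz). pose proof (nonpole_neq0 z Hz).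
  assert (z + RtoC (INR m) + 1 <> 0) by (rewrite <- Cplus_assoc, <- RtoC_INR_S; apply Hz).
  assert (E' : poch (z + 1) (S m) = poch z (S m) * (z + RtoC (INR m) + 1) / z)
    by (rewrite <- E; field; auto).
  rewrite E'. field. auto.
Qed.

Lemma CGamma_succ (z : C) : nonpole z -> CGamma (z + 1) = z * CGamma z.
Proof.
  intros Hz.
  apply (filterlim_locally_unique (V := C_NormedModule) (F := eventually) (Gauss_seq (z + 1)));
    [apply Gauss_seq_cvg |].
  rewrite <- (Cmult_1_r (z * CGamma z)).
  apply (filterlim_ext_loc (fun m => z * Gauss_seq z m * (RtoC (INR m) / (z + RtoC (INR m) + 1)))).
  - exists 1%nat. intros m Hm. symmetry. now apply Gauss_seq_shift.
  - apply filterlim_Cmult; [| apply nat_div_add_nat_cvg_1].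
    apply filterlim_Cmult; [apply filterlim_const | apply Gauss_seq_cvg].
Qed.

Lemma CGamma_add_nat (z : C) (k : nat) :
  nonpole z -> CGamma (z + RtoC (INR k)) = poch z k * CGamma z.
Proof.
  intros Hz. induction k as [| k IH].
  - simpl. rewrite Cplus_0_r. unfold poch. simpl. ring.
  - replace (z + RtoC (INR (S k))) with (z + RtoC (INR k) + 1) by (rewrite RtoC_INR_S; ring).
    rewrite CGamma_succ, IH by (now apply nonpole_add_nat).
    unfold poch. simpl. ring.
Qed.

(** * Binomial transforms of Pochhammer ratios *)

Lemma sumC_ext (n : nat) (f g : nat -> C) :
  (forall k, (k < n)%nat -> f k = g k) -> sumC n f = sumC n g.
Proof.
  induction n as [| n IH]; intros H; simpl; [reflexivity |].
  rewrite IH by (intros; apply H; lia). rewrite H by lia. reflexivity.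
Qed.

Lemma sumC_plus (n : nat) (f g : nat -> C) :
  sumC n (fun k => f k + g k) = sumC n f + sumC n g.
Proof. induction n as [| n IH]; simpl; [ring | rewrite IH; ring]. Qed.

Lemma sumC_minus (n : nat) (f g : nat -> C) :
  sumC n (fun k => f k - g k) = sumC n f - sumC n g.
Proof. induction n as [| n IH]; simpl; [ring | rewrite IH; ring]. Qed.

Lemma sumC_scal (n : nat) (c : C) (f : nat -> C) : sumC n (fun k => c * f k) = c * sumC n f.
Proof. induction n as [| n IH]; simpl; [ring | rewrite IH; ring]. Qed.

Lemma sumC_succ_l (n : nat) (f : nat -> C) : sumC (S n) f = f O + sumC n (fun k => f (S k)).
Proof.
  induction n as [| n IH]; [simpl; ring |].
  change (sumC (S (S n)) f) with (sumC (S n) f + f (S n)). rewrite IH. simpl. ring.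
Qed.

(* Stdlib's [Binomial.C n k] does not vanish for [k > n] (its factorial formula truncates
   [n - k] to 0), so Pascal's rule fails at the boundary; hence a nat-valued binomial. *)
Fixpoint choose (n k : nat) : nat :=
  match n, k with
  | _, O => 1
  | O, S _ => 0
  | S n', S k' => choose n' k' + choose n' (S k')
  end.

Lemma choose_0_r (n : nat) : choose n 0 = 1%nat.
Proof. now destruct n. Qed.

Lemma choose_gt (n k : nat) : (n < k)%nat -> choose n k = 0%nat.
Proof.
  revert k. induction n as [| n IH]; intros [| k] H; simpl; try lia.
  rewrite !IH by lia. reflexivity.
Qed.

Lemma choose_diag (n : nat) : choose n n = 1%nat.
Proof. induction n as [| n IH]; simpl; [reflexivity | now rewrite IH, choose_gt by lia]. Qed.

Lemma choose_succ_mul (n k : nat) : (S k * choose (S n) (S k) = S n * choose n k)%nat.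
Proof.
  revert k. induction n as [| n IH]; intros k.
  - destruct k; simpl; lia.
  - destruct k as [| k].
    + pose proof (IH 0%nat). simpl choose in *. rewrite !choose_0_r in *. lia.
    + change (choose (S (S n)) (S (S k))) with (choose (S n) (S k) + choose (S n) (S (S k)))%nat.
      pose proof (IH k). pose proof (IH (S k)).
      change (choose (S n) (S k)) with (choose n k + choose n (S k))%nat in *. nia.
Qed.

Lemma nbinom_choose (n k : nat) : (k <= n)%nat -> nbinom n k = INR (choose n k).
Proof.
  unfold nbinom, Binomial.C. revert k. induction n as [| n IH]; intros k Hk.
  - assert (k = O) as -> by lia. simpl. field.
  - destruct k as [| k].
    + rewrite choose_0_r, Nat.sub_0_r. change (fact 0) with 1%nat. change (INR 1) with 1%R.
      field. apply INR_fact_neq_0.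
    + destruct (Nat.eq_dec k n) as [-> | Hne].
      * rewrite choose_diag, Nat.sub_diag. change (fact 0) with 1%nat. change (INR 1) with 1%R.
        field. apply INR_fact_neq_0.
      * change (choose (S n) (S k)) with (choose n k + choose n (S k))%nat.
        rewrite plus_INR, <- !IH by lia. symmetry. apply Binomial.pascal. lia.
Qed.

Definition binomial_transform (n : nat) (f : nat -> C) : C :=
  sumC (S n) (fun k => (-1) ^ k * RtoC (INR (choose n k)) * f k).

Lemma binomial_transform_ext (n : nat) (f g : nat -> C) :
  (forall k, f k = g k) -> binomial_transform n f = binomial_transform n g.
Proof. intros H. apply sumC_ext. intros k _. now rewrite H. Qed.

Lemma binomial_transform_plus (n : nat) (f g : nat -> C) :
  binomial_transform n (fun k => f k + g k) = binomial_transform n f + binomial_transform n g.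
Proof. unfold binomial_transform. rewrite <- sumC_plus. apply sumC_ext. intros. ring. Qed.

Lemma binomial_transform_scal (n : nat) (c : C) (f : nat -> C) :
  binomial_transform n (fun k => c * f k) = c * binomial_transform n f.
Proof. unfold binomial_transform. rewrite <- sumC_scal. apply sumC_ext. intros. ring. Qed.

Lemma binomial_transform_succ (n : nat) (f : nat -> C) :
  binomial_transform (S n) f = binomial_transform n f - binomial_transform n (fun k => f (S k)).
Proof.
  set (g := fun k => (-1) ^ k * RtoC (INR (choose n (S k))) * f (S k)).
  assert (Hg : binomial_transform n f = f O - sumC (S n) g).
  { unfold binomial_transform. rewrite sumC_succ_l. cbn [sumC].
    unfold g at 2. rewrite (choose_gt n (S n)), choose_0_r by lia.
    rewrite (sumC_ext n _ (fun k => -1 * g k)) by (intros k _; unfold g; simpl; ring).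
    rewrite sumC_scal. simpl. ring. }
  unfold binomial_transform at 1. rewrite sumC_succ_l, choose_0_r.
  rewrite (sumC_ext (S n) _
             (fun k => -1 * ((-1) ^ k * RtoC (INR (choose n k)) * f (S k)) + -1 * g k))
    by (intros k _; unfold g; simpl choose; rewrite plus_INR, RtoC_plus; simpl; ring).
  rewrite sumC_plus, !sumC_scal, Hg. fold (binomial_transform n (fun k => f (S k))).
  simpl. ring.
Qed.

Lemma binomial_transform_absorb (n : nat) (f : nat -> C) :
  binomial_transform n (fun k => f (S k) / RtoC (INR (S k)))
  = (f O - binomial_transform (S n) f) / RtoC (INR (S n)).
Proof.
  unfold binomial_transform at 2. rewrite sumC_succ_l, choose_0_r.
  rewrite (sumC_ext (S n) _ (fun k => - RtoC (INR (S n)) *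
             ((-1) ^ k * RtoC (INR (choose n k)) * (f (S k) / RtoC (INR (S k)))))).
  - rewrite sumC_scal. fold (binomial_transform n (fun k => f (S k) / RtoC (INR (S k)))).
    set (T := binomial_transform n _). change (INR 1) with 1%R. simpl Cpow.
    field. apply RtoC_INR_S_neq0.
  - intros k _. pose proof (choose_succ_mul n k) as Habs.
    apply (f_equal (fun p => RtoC (INR p))) in Habs. rewrite !mult_INR, !RtoC_mult in Habs.
    assert (E : RtoC (INR (choose (S n) (S k)))
                = RtoC (INR (S n)) * RtoC (INR (choose n k)) / RtoC (INR (S k))).
    { rewrite <- Habs. field. apply RtoC_INR_S_neq0. }
    rewrite E. simpl Cpow. field. apply RtoC_INR_S_neq0.
Qed.

Lemma poch_ratio_succ_l (a c : C) (k : nat) : nonpole a ->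
  poch c (S k) / poch a (S k) = c / a * (poch (c + 1) k / poch (a + 1) k).
Proof.
  intros Ha. rewrite !poch_succ_l.
  pose proof (nonpole_neq0 a Ha). pose proof (poch_neq0 (a + 1) k (nonpole_succ a Ha)).
  field. auto.
Qed.

Lemma poch_ratio_contiguous (a c : C) (k : nat) : nonpole a ->
  poch c k / poch a k - (a - c) / a * (poch c k / poch (a + 1) k)
  = poch c (S k) / poch a (S k).
Proof.
  intros Ha.
  pose proof (nonpole_neq0 a Ha). pose proof (poch_neq0 a k Ha). pose proof (Ha k).
  assert (E : poch (a + 1) k = poch a (S k) / a).
  { rewrite poch_succ_l. field. auto. }
  rewrite E.
  change (poch c (S k)) with (poch c k * (c + RtoC (INR k))).
  change (poch a (S k)) with (poch a k * (a + RtoC (INR k))).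
  field. auto.
Qed.

Lemma poch_ratio_sub_succ (a c : C) (k : nat) : nonpole a -> c + RtoC (INR k) <> 0 ->
  poch c k / poch a k - poch c (S k) / poch a (S k)
  = (a - c) / (c + RtoC (INR k)) * (poch c (S k) / poch a (S k)).
Proof.
  intros Ha Hc. pose proof (poch_neq0 a k Ha). pose proof (Ha k).
  change (poch c (S k)) with (poch c k * (c + RtoC (INR k))).
  change (poch a (S k)) with (poch a k * (a + RtoC (INR k))).
  field. auto.
Qed.

Lemma binomial_transform_poch_ratio (n : nat) : forall a b : C, nonpole a ->
  binomial_transform n (fun k => poch b k / poch a k) = poch (a - b) n / poch a n.
Proof.
  induction n as [| n IH]; intros a b Ha.
  - unfold binomial_transform, poch. simpl. field; exact C1_nz.
  - rewrite binomial_transform_succ.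
    rewrite (binomial_transform_ext n (fun k => poch b (S k) / poch a (S k))
               (fun k => b / a * (poch (b + 1) k / poch (a + 1) k)))
      by (intros k; now apply poch_ratio_succ_l).
    rewrite binomial_transform_scal, !IH by auto using nonpole_succ.
    replace (a + 1 - (b + 1)) with (a - b) by ring.
    rewrite <- poch_ratio_contiguous by exact Ha.
    replace (a - (a - b)) with b by ring. reflexivity.
Qed.

Definition diff_quot_sum (v : nat -> C) (n : nat) : C :=
  sumC n (fun k => (v n - v k) / RtoC (INR (n - k))).

Lemma diff_quot_sum_succ (v : nat -> C) (n : nat) :
  diff_quot_sum v (S n) = (v (S n) - v O) / RtoC (INR (S n)) + diff_quot_sum (fun k => v (S k)) n.
Proof. unfold diff_quot_sum. apply sumC_succ_l. Qed.

Lemma diff_quot_sum_ext (v w : nat -> C) (n : nat) :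
  (forall k, v k = w k) -> diff_quot_sum v n = diff_quot_sum w n.
Proof. intros H. unfold diff_quot_sum. apply sumC_ext. intros. now rewrite !H. Qed.

Lemma diff_quot_sum_sub_scal (v w : nat -> C) (c : C) (n : nat) :
  diff_quot_sum v n - c * diff_quot_sum w n = diff_quot_sum (fun k => v k - c * w k) n.
Proof.
  unfold diff_quot_sum. rewrite <- sumC_scal, <- sumC_minus.
  apply sumC_ext. intros. unfold Cdiv. ring.
Qed.

Lemma harm_succ (k : nat) : harm (S k) = harm k + / RtoC (INR (S k)).
Proof. reflexivity. Qed.

Lemma binomial_transform_poch_ratio_harm (n : nat) : forall a b : C, nonpole a ->
  binomial_transform n (fun k => poch b k / poch a k * harm k)
  = diff_quot_sum (fun k => poch (a - b) k / poch a k) n.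
Proof.
  induction n as [| n IH]; intros a b Ha.
  - unfold binomial_transform, diff_quot_sum, harm. simpl. ring.
  - rewrite binomial_transform_succ.
    rewrite (binomial_transform_ext n (fun k => poch b (S k) / poch a (S k) * harm (S k))
      (fun k => b / a * (poch (b + 1) k / poch (a + 1) k * harm k)
                + poch b (S k) / poch a (S k) / RtoC (INR (S k)))).
    2:{ intros k. rewrite harm_succ, poch_ratio_succ_l by exact Ha. unfold Cdiv. ring. }
    rewrite binomial_transform_plus, binomial_transform_scal,
      (binomial_transform_absorb n (fun k => poch b k / poch a k)),
      binomial_transform_poch_ratio, !IH by auto using nonpole_succ.
    replace (a + 1 - (b + 1)) with (a - b) by ring.
    rewrite diff_quot_sum_succ.
    rewrite (diff_quot_sum_ext (fun k => poch (a - b) (S k) / poch a (S k))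
               (fun k => poch (a - b) k / poch a k - b / a * (poch (a - b) k / poch (a + 1) k)))
      by (intros k; rewrite <- poch_ratio_contiguous by exact Ha;
          replace (a - (a - b)) with b by ring; reflexivity).
    rewrite <- diff_quot_sum_sub_scal, !poch_0.
    field. auto using nonpole_neq0, poch_neq0, RtoC_INR_S_neq0.
Qed.

Lemma diff_quot_sum_abel (n : nat) : forall v : nat -> C,
  diff_quot_sum v n = harm n * (v n - v O) + sumC n (fun k => harm (n - 1 - k) * (v k - v (S k))).
Proof.
  induction n as [| n IH]; intros v.
  - unfold diff_quot_sum, harm. simpl. ring.
  - rewrite diff_quot_sum_succ, IH, sumC_succ_l.
    rewrite (sumC_ext n (fun k => harm (S n - 1 - S k) * (v (S k) - v (S (S k))))
                        (fun k => harm (n - 1 - k) * (v (S k) - v (S (S k)))))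
      by (intros k _; now replace (S n - 1 - S k)%nat with (n - 1 - k)%nat by lia).
    replace (S n - 1 - 0)%nat with n by lia.
    rewrite harm_succ. field. apply RtoC_INR_S_neq0.
Qed.

(** * Reciprocals of complex binomial coefficients *)

Lemma Cinv_Cbinom (x y : C) : / Cbinom x y = CGamma (y + 1) * CGamma (x - y + 1) / CGamma (x + 1).
Proof. unfold Cbinom, Cdiv. rewrite Cinv_mult, Cinv_inv. ring. Qed.

Lemma Cinv_Cbinom_add_nat (x y : C) (k : nat) : nonpole (x + 1) -> nonpole (x - y + 1) ->
  / Cbinom (x + RtoC (INR k)) y = / Cbinom x y * (poch (x - y + 1) k / poch (x + 1) k).
Proof.
  intros Hx Hxy. rewrite !Cinv_Cbinom.
  replace (x + RtoC (INR k) + 1) with (x + 1 + RtoC (INR k)) by ring.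
  replace (x + RtoC (INR k) - y + 1) with (x - y + 1 + RtoC (INR k)) by ring.
  rewrite (CGamma_add_nat (x + 1)), (CGamma_add_nat (x - y + 1)) by assumption.
  unfold Cdiv. rewrite !Cinv_mult. ring.
Qed.

Lemma Cinv_Cbinom_compl (x y : C) : nonpole y -> nonpole (x - y + 1) ->
  y * / Cbinom x (x - y + 1) = (x - y + 1) * / Cbinom x y.
Proof.
  intros Hy Hxy. rewrite !Cinv_Cbinom.
  replace (x - (x - y + 1) + 1) with y by ring.
  rewrite (CGamma_succ y Hy), (CGamma_succ (x - y + 1) Hxy). unfold Cdiv. ring.
Qed.

Lemma Cinv_Cbinom_compl_add_nat (x y : C) (k : nat) :
  nonpole (x + 1) -> nonpole y -> nonpole (x - y + 1) ->
  y / (x - y + 1) * / Cbinom (x + RtoC (INR k)) (x - y + 1)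
  = / Cbinom x y * (poch y k / poch (x + 1) k).
Proof.
  intros Hx Hy Hxy.
  rewrite Cinv_Cbinom_add_nat by (replace (x - (x - y + 1) + 1) with y by ring; assumption).
  replace (x - (x - y + 1) + 1) with y by ring.
  transitivity (/ (x - y + 1) * (y * / Cbinom x (x - y + 1)) * (poch y k / poch (x + 1) k));
    [unfold Cdiv; ring |].
  rewrite Cinv_Cbinom_compl, Cmult_assoc, Cinv_l by (auto using nonpole_neq0).
  ring.
Qed.

Lemma Cinv_Cbinom_compl_succ_sub (x y : C) (k : nat) :
  nonpole (x + 1) -> nonpole y -> nonpole (x - y + 1) ->
  y / ((RtoC (INR k) + y) * Cbinom (x + RtoC (INR k) + 1) (x - y + 1))
  = / Cbinom x y * (poch y k / poch (x + 1) k - poch y (S k) / poch (x + 1) (S k)).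
Proof.
  intros Hx Hy Hxy.
  rewrite poch_ratio_sub_succ by (auto; rewrite Cplus_comm; apply Hy).
  replace (x + 1 - y) with (x - y + 1) by ring.
  replace (x + RtoC (INR k) + 1) with (x + RtoC (INR (S k))) by (rewrite RtoC_INR_S; ring).
  transitivity ((x - y + 1) / (y + RtoC (INR k))
                * (/ Cbinom x y * (poch y (S k) / poch (x + 1) (S k)))); [| unfold Cdiv; ring].
  rewrite <- Cinv_Cbinom_compl_add_nat by assumption.
  rewrite (Cplus_comm y). unfold Cdiv. rewrite Cinv_mult.
  transitivity ((x - y + 1) * / (x - y + 1) * (y * / (RtoC (INR k) + y)
                 * / Cbinom (x + RtoC (INR (S k))) (x - y + 1))); [| ring].
  rewrite Cinv_r by (apply nonpole_neq0, Hxy). ring.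
Qed.

Theorem theorem13 (n : nat) (r s : C)
  (hr : ~ is_negint r) (hs : ~ is_negint s) (hs0 : s <> 0)
  (hrs : ~ is_negint (r - s)) :
  sumC (S n) (fun k =>
      (-1) ^ k * RtoC (nbinom n k) / Cbinom (RtoC (INR k) + r) s * harm k)
  = harm n * (s / (r - s + 1) * / Cbinom (RtoC (INR n) + r) (r - s + 1)
              - / Cbinom r s)
    + s * sumC n (fun k =>
        harm (n - 1 - k) / ((RtoC (INR k) + s) * Cbinom (r + RtoC (INR k) + 1) (r - s + 1))).
Proof.
  pose proof (nonpole_succ_of_not_negint r hr) as Ha.
  pose proof (nonpole_succ_of_not_negint (r - s) hrs) as Hb.
  pose proof (nonpole_of_not_negint s hs hs0) as Hs.
  rewrite (sumC_ext (S n) _ (fun k => / Cbinom r s * ((-1) ^ k * RtoC (INR (choose n k))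
                                   * (poch (r - s + 1) k / poch (r + 1) k * harm k)))).
  2:{ intros k Hk. unfold Cdiv.
      rewrite nbinom_choose, (Cplus_comm (RtoC (INR k)) r), Cinv_Cbinom_add_nat
        by (assumption || lia).
      unfold Cdiv. ring. }
  rewrite sumC_scal.
  fold (binomial_transform n (fun k => poch (r - s + 1) k / poch (r + 1) k * harm k)).
  rewrite binomial_transform_poch_ratio_harm, diff_quot_sum_abel by exact Ha.
  replace (r + 1 - (r - s + 1)) with s by ring.
  rewrite (Cplus_comm (RtoC (INR n)) r), Cinv_Cbinom_compl_add_nat by assumption.
  rewrite <- (sumC_scal n s), (sumC_ext n (fun k => s * _)
    (fun k => / Cbinom r s * (harm (n - 1 - k) * (poch s k / poch (r + 1) k
                                                  - poch s (S k) / poch (r + 1) (S k))))).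
  2:{ intros k _.
      transitivity (harm (n - 1 - k) * (s / ((RtoC (INR k) + s)
                      * Cbinom (r + RtoC (INR k) + 1) (r - s + 1)))); [unfold Cdiv; ring |].
      rewrite Cinv_Cbinom_compl_succ_sub by assumption. ring. }
  rewrite sumC_scal, !poch_0. replace (1 / 1 : C) with (1 : C) by (field; exact C1_nz).
  ring.
Qed.
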